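(* Let $N\ge 2$ and let $p$ be a polynomial with complex coefficients of degree at most $N-1$. Let $w_1,\ldots,w_{2N-1}\in\mathbb{T}$ be mutually distinct points and let $z_1,\ldots,z_{2N-3}\in\mathbb{T}$ be mutually distinct points. Then the $4N-4$ values $$|p(w_j)|,\ j=1,\ldots,2N-1,\qquad\text{and}\qquad |p'(z_k)|,\ k=1,\ldots,2N-3,$$ determine $p$ uniquely up to a global phase factor. That is, if $q$ is another complex polynomial of degree at most $N-1$ with $|q(w_j)|=|p(w_j)|$ for all $j$ and $|q'(z_k)|=|p'(z_k)|$ for all $k$, then $q=e^{i\varphi}p$ for some $\varphi\in\mathbb{R}$.
   Context: $\mathbb{T}=\{z\in\mathbb{C}:|z|=1\}$ denotes the unit circle and $p'$ the derivative of $p$. *)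

(* complex numbers modelled by an arbitrary numClosedFieldType. *)
From HB Require Import structures.
From mathcomp Require Import all_boot all_order all_algebra.
Set Implicit Arguments. Unset Strict Implicit. Unset Printing Implicit Defensive.

From HB Require Import structures.
From mathcomp Require Import all_boot all_order all_algebra.
From mathcomp Require Import zify ring.
Import Order.TTheory GRing.Theory Num.Theory.
Local Open Scope ring_scope.

Set Implicit Arguments.
Unset Strict Implicit.
Unset Printing Implicit Defensive.

(* Let [r_p] be the conjugate reciprocal of [p] in degree [< N], so that
   [p r_p = x ^ (N - 1) |p x| ^ 2] on the unit circle.  The [2N - 1] moduli of
   [p] determine the "autocorrelation" [p r_p], a polynomial of degree
   [<= 2N - 2], and the [2N - 3] moduli of [p'] likewise determine [p' r_(p')].
   Since [r_(p') = (N - 1) r_p - X (r_p)'], the two polynomials [X p' r_p] and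
   [p (X (r_p)' - (N - 1) r_p)] have a sum and a product fixed by these two
   autocorrelations, so they are the same for [q] up to order.  Either way the
   Wronskian of [p] and [q] vanishes, hence [q = c p], and [|c| = 1] follows
   from [p r_p = q r_q]. *)

Section DerivativeCharZero.
Variable R : numDomainType.
Implicit Types p q : {poly R}.

Lemma size_deriv p : size p^`() = (size p).-1.
Proof.
have [le_p1|lt1p] := leqP (size p) 1.
  by rewrite {1}[p]size1_polyC // derivC size_poly0 -subn1 (eqnP le_p1).
rewrite size_poly_eq // mulrn_eq0 -subn2 -subSn // subn2.
by rewrite lead_coef_eq0 -size_poly_eq0 -(subnKC lt1p).
Qed.

Lemma lead_coef_deriv p : lead_coef p^`() = lead_coef p *+ (size p).-1.
Proof.
have [le_p1|lt1p] := leqP (size p) 1.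
  by rewrite {1}[p]size1_polyC // derivC lead_coef0 -subn1 (eqnP le_p1) mulr0n.
by rewrite lead_coefE size_deriv coef_deriv lead_coefE; congr (p`_ _ *+ _); lia.
Qed.

Lemma mulX_derivXn n : 'X * ('X^n)^`() = n%:R * 'X^n :> {poly R}.
Proof.
rewrite derivXn; case: n => [|n]; rewrite /= ?mulr0n ?mulr0 ?mul0r //.
by rewrite mulrnAr -exprS -mulr_natl.
Qed.

Definition wronskian p q := p^`() * q - p * q^`().

Lemma size_eq_of_wronskian_eq0 p q :
  p != 0 -> q != 0 -> wronskian p q = 0 -> size p = size q.
Proof.
move=> p0 q0 /eqP; rewrite subr_eq0 => /eqP/(congr1 lead_coef).
rewrite !lead_coefM !lead_coef_deriv mulrnAl mulrnAr.
have lpq : lead_coef p * lead_coef q != 0 by rewrite mulf_neq0 ?lead_coef_eq0.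
rewrite -mulr_natr -[X in _ = X -> _]mulr_natr => /(mulfI lpq)/eqP; rewrite eqr_nat => /eqP.
by move: p0 q0; rewrite -!size_poly_gt0; lia.
Qed.

End DerivativeCharZero.

Lemma wronskian_eq0_scale (F : numFieldType) (p q : {poly F}) :
  q != 0 -> wronskian p q = 0 -> exists c, p = c *: q.
Proof.
move=> q0 Wpq; have [->|p0] := eqVneq p 0; first by exists 0; rewrite scale0r.
have Epq := size_eq_of_wronskian_eq0 p0 q0 Wpq.
set c := lead_coef p / lead_coef q; exists c.
apply/eqP; rewrite -subr_eq0; apply: contraT => r0.
have Wr : wronskian (p - c *: q) q = 0.
  by rewrite /wronskian derivB derivZ -!mul_polyC -Wpq /wronskian; ring.
have Er := size_eq_of_wronskian_eq0 r0 q0 Wr.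
move: r0; rewrite -lead_coef_eq0 lead_coefE Er coefB coefZ -lead_coefE -Epq -lead_coefE /c.
by rewrite mulfVK ?subrr ?eqxx // lead_coef_eq0.
Qed.

Section ConjReverse.
Variable C : numClosedFieldType.
Implicit Types (p q : {poly C}) (x c : C).

(* The reciprocal polynomial [x ^+ m.-1 * conj (p (1 / conj x))] of [p], read as
   a polynomial of degree [< m]. *)
Definition conj_reverse m p : {poly C} := \poly_(i < m) (p`_(m.-1 - i))^*.

Lemma coef_conj_reverse m p i :
  (conj_reverse m p)`_i = if (i < m)%N then (p`_(m.-1 - i))^* else 0.
Proof. exact: coef_poly. Qed.

Lemma size_conj_reverse m p : (size (conj_reverse m p) <= m)%N.
Proof. exact: size_poly. Qed.

Lemma conj_reverseZ m c p : conj_reverse m (c *: p) = c^* *: conj_reverse m p.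
Proof.
apply/polyP => i; rewrite coefZ !coef_conj_reverse coefZ rmorphM.
by case: ifP; rewrite ?mulr0.
Qed.

Lemma conj_reverse_eq0 m p : (size p <= m)%N -> (conj_reverse m p == 0) = (p == 0).
Proof.
move=> le_pm; apply/eqP/eqP => [p0|->]; last first.
  by apply/polyP => i; rewrite coef_conj_reverse !coef0 rmorph0 if_same.
apply/polyP => j; rewrite coef0.
have [lt_jm|le_mj] := ltnP j m; last by rewrite nth_default // (leq_trans le_pm).
move: (congr1 (fun r : {poly C} => r`_(m.-1 - j)) p0) => /=.
rewrite coef_conj_reverse coef0 ifT; last by lia.
by rewrite (_ : m.-1 - (m.-1 - j) = j)%N; [move/eqP; rewrite conjC_eq0 => /eqP | lia].
Qed.

Lemma horner_conj_reverse m p x : (size p <= m)%N -> `|x| = 1 ->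
  (conj_reverse m p).[x] = x ^+ m.-1 * (p.[x])^*.
Proof.
move=> le_pm x1; have xx : x * x^* = 1 by rewrite -normCK x1 expr1n.
rewrite (horner_coef_wide _ (size_conj_reverse _ _)) (horner_coef_wide _ le_pm).
rewrite rmorph_sum mulr_sumr (reindex_inj rev_ord_inj) /=.
apply: eq_bigr => j _; have lt_jm := ltn_ord j.
rewrite coef_conj_reverse ifT; last by lia.
rewrite (_ : m.-1 - (m - j.+1) = j)%N; last by lia.
rewrite rmorphM rmorphXn /= (_ : m.-1 = (m - j.+1) + j)%N; last by lia.
by rewrite exprD -mulrA (mulrCA (x ^+ j)) -exprMn xx expr1n mulr1 mulrC.
Qed.

Lemma conj_reverse_deriv n p :
  conj_reverse n p^`() = n%:R * conj_reverse n.+1 p - 'X * (conj_reverse n.+1 p)^`().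
Proof.
apply/polyP => i; rewrite coefB mulr_natl coefMn coefXM !coef_deriv !coef_conj_reverse coef_deriv.
case: i => [|i] /=.
  case: n => [|n]; first by rewrite mulr0n subr0.
  by rewrite subn0 rmorphMn subr0.
have [lt_in|le_ni] := ltnP i.+1 n.
  rewrite ifT; last by lia.
  rewrite (_ : (n.-1 - i.+1).+1 = n - i.+1)%N; last by lia.
  by rewrite rmorphMn /= mulrnBr // ltnW.
have [<-|ne_in] := eqVneq i.+1 n; first by rewrite subrr.
have /negbTE -> : ~~ (i.+1 < n.+1)%N by lia.
by rewrite !mul0rn subrr.
Qed.

Definition autocorr m p := p * conj_reverse m p.

Lemma autocorr_eq0 m p : (size p <= m)%N -> (autocorr m p == 0) = (p == 0).
Proof. by move=> le_pm; rewrite mulf_eq0 conj_reverse_eq0 // orbb. Qed.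

Lemma autocorrZ m c p : autocorr m (c *: p) = (c * c^*) *: autocorr m p.
Proof. by rewrite /autocorr conj_reverseZ -scalerAl -scalerAr scalerA. Qed.

Lemma size_autocorr m p : (size p <= m)%N -> (size (autocorr m p) <= (2 * m).-1)%N.
Proof.
move=> le_pm; apply: leq_trans (size_polyMleq _ _) _.
by have := size_conj_reverse m p; lia.
Qed.

Lemma horner_autocorr m p x : (size p <= m)%N -> `|x| = 1 ->
  (autocorr m p).[x] = x ^+ m.-1 * `|p.[x]| ^+ 2.
Proof. by move=> le_pm x1; rewrite hornerM horner_conj_reverse // normCK mulrCA. Qed.

Lemma autocorr_eq_of_norm_eq (I : finType) (w : I -> C) m p q :
  injective w -> ((2 * m).-1 <= #|I|)%N -> (forall i, `|w i| = 1) ->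
  (forall i, `|q.[w i]| = `|p.[w i]|) -> (size p <= m)%N -> (size q <= m)%N ->
  autocorr m p = autocorr m q.
Proof.
move=> w_inj le_mI w1 Eqp le_pm le_qm; apply/eqP; rewrite -subr_eq0; apply/eqP.
apply: (@roots_geq_poly_eq0 _ _ (map w (enum I))).
- by apply/allP => _ /mapP[i _ ->]; rewrite rootE hornerD hornerN !horner_autocorr ?Eqp ?subrr.
- by rewrite map_inj_uniq ?enum_uniq.
rewrite size_map -cardE; apply: leq_trans _ le_mI.
by apply: leq_trans (size_polyD _ _) _; rewrite size_polyN geq_max !size_autocorr.
Qed.

(* With [r := conj_reverse n.+1 p], the polynomials [X p' r] and [p (X r' - n r)]
   are the two roots of a quadratic whose coefficients only depend on the
   autocorrelations of [p] and [p']. *)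
Lemma autocorr_quadratic n p y :
  (y - 'X * p^`() * conj_reverse n.+1 p) *
  (y - p * ('X * (conj_reverse n.+1 p)^`() - n%:R * conj_reverse n.+1 p)) =
  y ^+ 2 - ('X * (autocorr n.+1 p)^`() - n%:R * autocorr n.+1 p) * y
  - 'X * autocorr n.+1 p * autocorr n p^`().
Proof. by rewrite /autocorr conj_reverse_deriv derivM; ring. Qed.

Lemma deriv_eq0_of_wronskian_Xn_conj_reverse n p q :
  p != 0 -> q != 0 -> (size p <= n.+1)%N ->
  wronskian ('X^n * q) (conj_reverse n.+1 p) = 0 -> p^`() = 0 /\ q^`() = 0.
Proof.
move=> p0 q0 le_pn W0.
have r0 : conj_reverse n.+1 p != 0 by rewrite conj_reverse_eq0.
have [c Ec] := wronskian_eq0_scale r0 W0.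
have Xn0 : 'X^n != 0 :> {poly C} by rewrite -size_poly_eq0 size_polyXn.
have Xnq0 : 'X^n * q != 0 by rewrite mulf_neq0.
split.
  have c0 : c != 0 by apply: contraNneq Xnq0 => c0; rewrite Ec c0 scale0r.
  apply/polyP => i; rewrite coef_deriv coef0.
  have [lt_in|le_ni] := ltnP i n; last by rewrite nth_default ?mul0rn // (leq_trans le_pn).
  move: (congr1 (fun r : {poly C} => r`_(n - i.+1)) Ec) => /=.
  rewrite coefXnM coefZ coef_conj_reverse ifT; last by lia.
  rewrite ifT; last by lia.
  rewrite (_ : n.+1.-1 - (n - i.+1) = i.+1)%N; last by lia.
  by move/esym/eqP; rewrite mulf_eq0 (negbTE c0) conjC_eq0 => /eqP ->; rewrite mul0rn.
have : (size ('X^n * q)%R <= n.+1)%N.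
  by rewrite Ec; apply: leq_trans (size_scale_leq _ _) (size_conj_reverse _ _).
rewrite size_mul // size_polyXn addSn /= -[n.+1]addn1 leq_add2l => le_q1.
by rewrite [q]size1_polyC ?derivC.
Qed.

Lemma wronskian_eq0_of_autocorr_eq n p q :
  p != 0 -> (size p <= n.+1)%N -> (size q <= n.+1)%N ->
  autocorr n.+1 p = autocorr n.+1 q -> autocorr n p^`() = autocorr n q^`() ->
  wronskian q p = 0.
Proof.
move=> p0 le_pn le_qn E E'.
have q0 : q != 0.
  by apply: contra_neq p0 => q0; apply/eqP; rewrite -(autocorr_eq0 le_pn) E q0 /autocorr mul0r.
set r := conj_reverse n.+1 p; set t := conj_reverse n.+1 q.
have t0 : t != 0 by rewrite conj_reverse_eq0.
have X0 : ('X : {poly C}) != 0 by rewrite polyX_eq0.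
have E0 : p * r = q * t := E.
have : ('X * q^`() * t - 'X * p^`() * r) *
       ('X * q^`() * t - p * ('X * r^`() - n%:R * r)) = 0.
  by rewrite autocorr_quadratic E E' -autocorr_quadratic subrr mul0r.
(* Either [X q' t = X p' r], or [X q' t = p (X r' - n r)]; in the second case
   [X^n q] is proportional to [r], which forces [p] and [q] to be constant. *)
move/eqP; rewrite mulf_eq0 !subr_eq0 => /orP[] /eqP Eqp.
  move: Eqp; rewrite -!mulrA => /(mulfI X0) Eqp; apply: (mulIf t0).
  by rewrite mul0r /wronskian mulrBl mulrAC Eqp (mulrAC q) -E0; ring.
have Eq : 'X * q^`() * r = q * ('X * r^`() - n%:R * r).
  by apply: (mulIf t0); rewrite mulrAC Eqp mulrAC E0; ring.
have W0 : wronskian ('X^n * q) r = 0.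
  apply: (mulfI X0); rewrite mulr0.
  have -> : 'X * wronskian ('X^n * q) r = ('X * ('X^n)^`()) * q * r
      + 'X^n * ('X * q^`() * r) - 'X^n * q * ('X * r^`()).
    by rewrite /wronskian derivM; ring.
  by rewrite mulX_derivXn Eq; ring.
have [dp0 dq0] := deriv_eq0_of_wronskian_Xn_conj_reverse p0 q0 le_pn W0.
by rewrite /wronskian dp0 dq0 mul0r mulr0 subrr.
Qed.

Lemma autocorr_eq_phase n p q :
  (size p <= n.+1)%N -> (size q <= n.+1)%N ->
  autocorr n.+1 p = autocorr n.+1 q -> autocorr n p^`() = autocorr n q^`() ->
  exists c, `|c| = 1 /\ q = c *: p.
Proof.
move=> le_pn le_qn E E'.
have [p0|p0] := eqVneq p 0.
  exists 1; split; first exact: normr1.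
  by move: E; rewrite p0 scale1r /autocorr mul0r => /esym/eqP; rewrite autocorr_eq0 // => /eqP.
have [c Eq] := wronskian_eq0_scale p0 (wronskian_eq0_of_autocorr_eq p0 le_pn le_qn E E').
exists c; split => //; move: E; rewrite Eq autocorrZ => /eqP.
rewrite -subr_eq0 -{1}(scale1r (autocorr _ p)) -scalerBl scaler_eq0 autocorr_eq0 //.
rewrite (negbTE p0) orbF subr_eq0 => /eqP cc.
by apply/eqP; rewrite -(sqrp_eq1 (normr_ge0 c)) normCK -cc.
Qed.

End ConjReverse.

Theorem theorem1p1 (C : numClosedFieldType) (N : nat) (hN : (2 <= N)%N)
  (p q : {poly C}) (hp : (size p <= N)%N) (hq : (size q <= N)%N)
  (w : 'I_(2 * N - 1)%N -> C) (z : 'I_(2 * N - 3)%N -> C)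
  (hw : injective w) (hz : injective z)
  (hwT : forall j, `|w j| = 1) (hzT : forall k, `|z k| = 1)
  (hqw : forall j, `|q.[w j]| = `|p.[w j]|)
  (hqz : forall k, `|(q^`()).[z k]| = `|(p^`()).[z k]|) :
  exists c : C, `|c| = 1 /\ q = c *: p.
Proof.
case: N => [//|n] in hN hp hq w z hw hz hwT hzT hqw hqz *.
have hp' : (size p^`() <= n)%N by rewrite size_deriv -subn1 leq_subLR add1n.
have hq' : (size q^`() <= n)%N by rewrite size_deriv -subn1 leq_subLR add1n.
apply: (autocorr_eq_phase hp hq).
  by apply: (autocorr_eq_of_norm_eq hw); rewrite ?card_ord //; lia.
by apply: (autocorr_eq_of_norm_eq hz); rewrite ?card_ord //; lia.
Qed.
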